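(* Let $p \ge 1$, $t \ge 0$ and $\mathbf a = [a_1\;a_2\;a_3\;a_4]^t \in \mathbb R^4$. Let $\mathbf K, \mathbf L$ be the linear maps on $\mathbb R^4$ given by $\mathbf K\mathbf y = [y_1\;\; 0.5(y_2+y_3)\;\; 0.5(y_2+y_3)\;\; y_4]^t$ and $\mathbf L\mathbf y = [0\;\; 0.5(y_2-y_3)\;\; 0.5(y_3-y_2)\;\; 0]^t$. For $\mathbf b\in\mathbb R^4$ let $\mathcal P_s(\mathbf b,t)$ denote the minimizer over $\mathbf z\in\mathbb R^4$ of $\frac12\|\mathbf z-\mathbf b\|_2^2 + t\|\mathbf z\|_{S(p)}$. Then the minimizer over $\mathbf z\in\mathbb R^4$ of $$L_s(\mathbf z,\mathbf a) = \tfrac12\|\mathbf z - \mathbf a\|_2^2 + t\|\mathbf K\mathbf z\|_{S(p)}$$ is $\bar{\mathcal P}_s(\mathbf a,t) = \mathbf L\mathbf a + \mathcal P_s(\mathbf K\mathbf a, t)$.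
   Context: For a vector $\mathbf y = [y_1\;y_2\;y_3\;y_4]^t\in\mathbb R^4$, $\|\mathbf y\|_{S(p)}$ denotes the Schatten $p$-norm (the $\ell_p$ norm of the singular values) of the $2\times2$ matrix $\begin{bmatrix} y_1 & y_2\\ y_3 & y_4\end{bmatrix}$. $\|\cdot\|_2$ is the Euclidean norm. *)

From Stdlib Require Import Reals.
Open Scope R_scope.

Record vec4 : Type := V4 { c1 : R; c2 : R; c3 : R; c4 : R }.

Definition vadd (u v : vec4) : vec4 :=
  V4 (c1 u + c1 v) (c2 u + c2 v) (c3 u + c3 v) (c4 u + c4 v).
Definition vsub (u v : vec4) : vec4 :=
  V4 (c1 u - c1 v) (c2 u - c2 v) (c3 u - c3 v) (c4 u - c4 v).

Definition norm2 (y : vec4) : R :=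
  sqrt (c1 y ^ 2 + c2 y ^ 2 + c3 y ^ 2 + c4 y ^ 2).

(* Real power x^p for x >= 0, with the convention 0^p = 0 (p > 0).
   (Stdlib's Rpower 0 p = exp (p * ln 0) = 1, hence the guard.) *)
Definition rpow (x p : R) : R := if Req_EM_T x 0 then 0 else Rpower x p.

(* Singular values of M = [[y1, y2], [y3, y4]]: square roots of the two
   eigenvalues of the symmetric matrix G = M^t M, obtained from the
   characteristic polynomial  X^2 - tr(G) X + det(G). *)
Definition gram11 (y : vec4) : R := c1 y * c1 y + c3 y * c3 y.
Definition gram12 (y : vec4) : R := c1 y * c2 y + c3 y * c4 y.
Definition gram22 (y : vec4) : R := c2 y * c2 y + c4 y * c4 y.
Definition gram_tr (y : vec4) : R := gram11 y + gram22 y.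
Definition gram_det (y : vec4) : R := gram11 y * gram22 y - gram12 y * gram12 y.

Definition eig_max (y : vec4) : R :=
  (gram_tr y + sqrt (gram_tr y ^ 2 - 4 * gram_det y)) / 2.
Definition eig_min (y : vec4) : R :=
  (gram_tr y - sqrt (gram_tr y ^ 2 - 4 * gram_det y)) / 2.

Definition sing_max (y : vec4) : R := sqrt (eig_max y).
Definition sing_min (y : vec4) : R := sqrt (eig_min y).

Definition schatten (p : R) (y : vec4) : R :=
  rpow (rpow (sing_max y) p + rpow (sing_min y) p) (/ p).

Definition Kmap (y : vec4) : vec4 :=
  V4 (c1 y) (0.5 * (c2 y + c3 y)) (0.5 * (c2 y + c3 y)) (c4 y).
Definition Lmap (y : vec4) : vec4 :=
  V4 0 (0.5 * (c2 y - c3 y)) (0.5 * (c3 y - c2 y)) 0.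

Definition prox_obj (p t : R) (b z : vec4) : R :=
  / 2 * norm2 (vsub z b) ^ 2 + t * schatten p z.

Definition Ls (p t : R) (z a : vec4) : R :=
  / 2 * norm2 (vsub z a) ^ 2 + t * schatten p (Kmap z).

Definition is_minimizer (f : vec4 -> R) (x : vec4) : Prop :=
  forall z, f x <= f z.

(* [K] is the orthogonal projection onto the matrices fixed by transposition and
   [L = I - K], so [L_s(z, a) = f (K z) + |L z - L a|^2 / 2] where [f] is the
   objective of [P_s(K a, t)].  The Schatten norm is convex, hence [f] is strongly
   convex and has at most one minimizer; as [f] is also invariant under
   transposition, that minimizer [w] is symmetric.  Then [z = L a + w] makes both
   terms minimal, and any minimizer [z] must satisfy [K z = w] and [L z = L a].
   For convexity, the singular values of a 2x2 matrix are [(U + V) / 2] and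
   [|U - V| / 2] with [U], [V] convex in the matrix, and the l_p norm of
   [((U + V) / 2, (U - V) / 2)] is convex and monotone in [(U, V)] by Minkowski. *)

From Stdlib Require Import Reals Lra Psatz.
Open Scope R_scope.

Lemma rpow_0_l q : rpow 0 q = 0.
Proof. unfold rpow; destruct (Req_EM_T 0 0); [reflexivity | congruence]. Qed.

Lemma rpow_Rpower x q : 0 < x -> rpow x q = Rpower x q.
Proof. intros Hx; unfold rpow; destruct (Req_EM_T x 0); [lra | reflexivity]. Qed.

Lemma rpow_gt0 x q : 0 < x -> 0 < rpow x q.
Proof. intros Hx; rewrite rpow_Rpower by exact Hx; apply exp_pos. Qed.

Lemma rpow_ge0 x q : 0 <= rpow x q.
Proof. unfold rpow; destruct (Req_EM_T x 0); [lra | left; apply exp_pos]. Qed.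

Lemma rpow_eq0 x q : 0 <= x -> rpow x q = 0 -> x = 0.
Proof.
  intros Hx Hq; destruct (Req_dec x 0) as [| Hx0]; [assumption |].
  pose proof (rpow_gt0 x q ltac:(lra)); lra.
Qed.

Lemma rpow_1_l q : rpow 1 q = 1.
Proof.
  rewrite rpow_Rpower by lra; unfold Rpower.
  rewrite ln_1, Rmult_0_r; apply exp_0.
Qed.

Lemma rpow_mult_distr x y q : 0 <= x -> 0 <= y ->
  rpow (x * y) q = rpow x q * rpow y q.
Proof.
  intros Hx Hy.
  destruct (Req_dec x 0) as [-> | Hx0]; [rewrite Rmult_0_l, !rpow_0_l; ring |].
  destruct (Req_dec y 0) as [-> | Hy0]; [rewrite Rmult_0_r, !rpow_0_l; ring |].
  rewrite !rpow_Rpower by nra.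
  symmetry; apply Rpower_mult_distr; lra.
Qed.

Lemma rpow_rpow_inv x q r : 0 <= x -> q * r = 1 -> rpow (rpow x q) r = x.
Proof.
  intros Hx Hqr.
  destruct (Req_dec x 0) as [-> | Hx0]; [rewrite !rpow_0_l; reflexivity |].
  rewrite (rpow_Rpower x) by lra; rewrite rpow_Rpower by apply exp_pos.
  rewrite Rpower_mult, Hqr; apply Rpower_1; lra.
Qed.

Lemma rpow_le_compat x y q : 0 < q -> 0 <= x <= y -> rpow x q <= rpow y q.
Proof.
  intros Hq [Hx Hxy].
  destruct (Req_dec x 0) as [-> | Hx0]; [rewrite rpow_0_l; apply rpow_ge0 |].
  rewrite !rpow_Rpower by lra; apply Rle_Rpower_l; lra.
Qed.

(* For [p >= 1] the derivative [p m^(p-1)] of [x^p] is nondecreasing, so by the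
   mean value theorem the graph lies above its tangent at [m]. *)
Lemma rpow_ge_tangent p m x : 1 <= p -> 0 < m -> 0 <= x ->
  Rpower m p + p * Rpower m (p - 1) * (x - m) <= rpow x p.
Proof.
  intros Hp Hm Hx.
  assert (Hsplit : Rpower m p = Rpower m (p - 1) * m).
  { rewrite <- (Rpower_1 m) at 3 by exact Hm; rewrite <- Rpower_plus; f_equal; ring. }
  destruct (Req_dec x 0) as [-> | Hx0].
  { rewrite rpow_0_l; assert (0 < Rpower m (p - 1)) by apply exp_pos.
    assert (0 <= Rpower m (p - 1) * m * (p - 1)) by (apply Rmult_le_pos; nra).
    nra. }
  rewrite rpow_Rpower by lra.
  assert (Hderiv : forall c, 0 < c ->
    derivable_pt_lim (fun y => Rpower y p) c (p * Rpower c (p - 1)))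
    by (intros; apply derivable_pt_lim_power; assumption).
  destruct (Rtotal_order m x) as [Hlt | [<- | Hgt]].
  - destruct (MVT_cor2 _ _ m x Hlt (fun c Hc => Hderiv c ltac:(lra))) as [c [Hc Hmc]].
    assert (Rpower m (p - 1) <= Rpower c (p - 1)) by (apply Rle_Rpower_l; lra).
    assert (0 <= p * (x - m) * (Rpower c (p - 1) - Rpower m (p - 1)))
      by (apply Rmult_le_pos; nra).
    simpl in Hc; lra.
  - lra.
  - destruct (MVT_cor2 _ _ x m Hgt (fun c Hc => Hderiv c ltac:(lra))) as [c [Hc Hmc]].
    assert (Rpower c (p - 1) <= Rpower m (p - 1)) by (apply Rle_Rpower_l; lra).
    assert (0 <= p * (m - x) * (Rpower m (p - 1) - Rpower c (p - 1)))
      by (apply Rmult_le_pos; nra).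
    simpl in Hc; lra.
Qed.

Lemma rpow_convex p l x y : 1 <= p -> 0 <= l <= 1 -> 0 <= x -> 0 <= y ->
  rpow (l * x + (1 - l) * y) p <= l * rpow x p + (1 - l) * rpow y p.
Proof.
  intros Hp Hl Hx Hy.
  pose proof (rpow_ge0 x p); pose proof (rpow_ge0 y p).
  set (m := l * x + (1 - l) * y).
  destruct (Req_dec m 0) as [-> | Hm0]; [rewrite rpow_0_l; nra |].
  pose proof (rpow_ge_tangent p m x Hp ltac:(unfold m in *; nra) Hx).
  pose proof (rpow_ge_tangent p m y Hp ltac:(unfold m in *; nra) Hy).
  rewrite rpow_Rpower by (unfold m in *; nra).
  set (D := p * Rpower m (p - 1)) in *.
  assert (l * (D * (x - m)) + (1 - l) * (D * (y - m)) = 0) by (unfold m; ring).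
  nra.
Qed.

Lemma rpow_abs_convex p l u v : 1 <= p -> 0 <= l <= 1 ->
  rpow (Rabs (l * u + (1 - l) * v)) p <= l * rpow (Rabs u) p + (1 - l) * rpow (Rabs v) p.
Proof.
  intros Hp Hl.
  eapply Rle_trans; [| apply rpow_convex; auto using Rabs_pos].
  apply rpow_le_compat; [lra | split; [apply Rabs_pos |]].
  eapply Rle_trans; [apply Rabs_triang |].
  rewrite !Rabs_mult, (Rabs_pos_eq l), (Rabs_pos_eq (1 - l)) by lra; lra.
Qed.

Definition lp2 (p a b : R) : R := rpow (rpow (Rabs a) p + rpow (Rabs b) p) (/ p).

Lemma lp2_ge0 p a b : 0 <= lp2 p a b.
Proof. apply rpow_ge0. Qed.

Lemma rpow_lp2 p a b : 0 < p -> rpow (lp2 p a b) p = rpow (Rabs a) p + rpow (Rabs b) p.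
Proof.
  intros Hp; apply rpow_rpow_inv; [| field; lra].
  pose proof (rpow_ge0 (Rabs a) p); pose proof (rpow_ge0 (Rabs b) p); lra.
Qed.

Lemma lp2_scale p c a b : 0 < p -> 0 <= c -> lp2 p (c * a) (c * b) = c * lp2 p a b.
Proof.
  intros Hp Hc; unfold lp2.
  rewrite !Rabs_mult, (Rabs_pos_eq c Hc), !rpow_mult_distr by auto using Rabs_pos.
  rewrite <- Rmult_plus_distr_l, rpow_mult_distr by
    (auto using rpow_ge0; pose proof (rpow_ge0 (Rabs a) p);
     pose proof (rpow_ge0 (Rabs b) p); lra).
  rewrite rpow_rpow_inv by (try field; lra); reflexivity.
Qed.

Lemma lp2_eq0 p a b : 0 < p -> lp2 p a b = 0 -> a = 0 /\ b = 0.
Proof.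
  intros Hp H0.
  pose proof (rpow_ge0 (Rabs a) p); pose proof (rpow_ge0 (Rabs b) p).
  apply rpow_eq0 in H0; [| lra].
  assert (Habs0 : forall x, rpow (Rabs x) p = 0 -> x = 0).
  { intros x Hx; apply rpow_eq0 in Hx; [| apply Rabs_pos].
    pose proof (Rle_abs x); pose proof (Rle_abs (- x)); rewrite Rabs_Ropp in *; lra. }
  split; apply Habs0; lra.
Qed.

Lemma lp2_le1 p a b : 0 < p -> rpow (Rabs a) p + rpow (Rabs b) p <= 1 -> lp2 p a b <= 1.
Proof.
  intros Hp H1; rewrite <- (rpow_1_l (/ p)).
  apply rpow_le_compat; [apply Rinv_0_lt_compat; lra |].
  pose proof (rpow_ge0 (Rabs a) p); pose proof (rpow_ge0 (Rabs b) p); lra.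
Qed.

Lemma rpow_lp2_normalize p a b : 0 < p -> 0 < lp2 p a b ->
  rpow (Rabs (a / lp2 p a b)) p + rpow (Rabs (b / lp2 p a b)) p = 1.
Proof.
  intros Hp HA; set (A := lp2 p a b) in *.
  assert (Hunit : lp2 p (/ A * a) (/ A * b) = 1).
  { rewrite lp2_scale by (auto; left; apply Rinv_0_lt_compat; lra).
    unfold A; field; fold A; lra. }
  unfold Rdiv; rewrite !(Rmult_comm _ (/ A)), <- (rpow_lp2 p _ _ Hp), Hunit.
  apply rpow_1_l.
Qed.

(* Minkowski: [(a1 + a2, b1 + b2) / (A + B)] is the convex combination, with
   weight [A / (A + B)], of the unit vectors [(a1, b1) / A] and [(a2, b2) / B]. *)
Lemma lp2_triangle p a1 b1 a2 b2 : 1 <= p ->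
  lp2 p (a1 + a2) (b1 + b2) <= lp2 p a1 b1 + lp2 p a2 b2.
Proof.
  intros Hp.
  pose proof (lp2_ge0 p a1 b1); pose proof (lp2_ge0 p a2 b2).
  set (A := lp2 p a1 b1) in *; set (B := lp2 p a2 b2) in *.
  destruct (Req_dec A 0) as [HA | HA].
  { destruct (lp2_eq0 p a1 b1 ltac:(lra) HA) as [-> ->]; rewrite !Rplus_0_l; unfold B; lra. }
  destruct (Req_dec B 0) as [HB | HB].
  { destruct (lp2_eq0 p a2 b2 ltac:(lra) HB) as [-> ->]; rewrite !Rplus_0_r; unfold A; lra. }
  set (l := A / (A + B)).
  assert (Hl : 0 <= l <= 1).
  { assert (0 < / (A + B)) by (apply Rinv_0_lt_compat; lra).
    assert (1 - l = B * / (A + B)) by (unfold l; field; lra).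
    unfold l, Rdiv in *; split; nra. }
  assert (Hmix : forall u1 u2, (u1 + u2) / (A + B) = l * (u1 / A) + (1 - l) * (u2 / B))
    by (intros; unfold l; field; lra).
  pose proof (rpow_lp2_normalize p a1 b1 ltac:(lra) ltac:(fold A; lra)) as N1.
  pose proof (rpow_lp2_normalize p a2 b2 ltac:(lra) ltac:(fold B; lra)) as N2.
  fold A in N1; fold B in N2.
  assert (Hball : lp2 p ((a1 + a2) / (A + B)) ((b1 + b2) / (A + B)) <= 1).
  { apply lp2_le1; [lra |]; rewrite !Hmix.
    pose proof (rpow_abs_convex p l (a1 / A) (a2 / B) Hp Hl).
    pose proof (rpow_abs_convex p l (b1 / A) (b2 / B) Hp Hl).
    nra. }
  replace (a1 + a2) with ((A + B) * ((a1 + a2) / (A + B))) by (field; lra).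
  replace (b1 + b2) with ((A + B) * ((b1 + b2) / (A + B))) by (field; lra).
  rewrite lp2_scale by lra.
  nra.
Qed.

Lemma lp2_convex p l a1 b1 a2 b2 : 1 <= p -> 0 <= l <= 1 ->
  lp2 p (l * a1 + (1 - l) * a2) (l * b1 + (1 - l) * b2)
    <= l * lp2 p a1 b1 + (1 - l) * lp2 p a2 b2.
Proof.
  intros Hp Hl.
  rewrite <- !lp2_scale by lra; apply lp2_triangle; exact Hp.
Qed.

Definition lp2_sumdiff (p x y : R) : R := lp2 p ((x + y) / 2) ((x - y) / 2).

Lemma lp2_sumdiff_convex p l x1 y1 x2 y2 : 1 <= p -> 0 <= l <= 1 ->
  lp2_sumdiff p (l * x1 + (1 - l) * x2) (l * y1 + (1 - l) * y2)
    <= l * lp2_sumdiff p x1 y1 + (1 - l) * lp2_sumdiff p x2 y2.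
Proof.
  intros Hp Hl; unfold lp2_sumdiff.
  replace ((l * x1 + (1 - l) * x2 + (l * y1 + (1 - l) * y2)) / 2)
    with (l * ((x1 + y1) / 2) + (1 - l) * ((x2 + y2) / 2)) by field.
  replace ((l * x1 + (1 - l) * x2 - (l * y1 + (1 - l) * y2)) / 2)
    with (l * ((x1 - y1) / 2) + (1 - l) * ((x2 - y2) / 2)) by field.
  apply lp2_convex; assumption.
Qed.

Lemma lp2_sumdiff_comm p x y : lp2_sumdiff p x y = lp2_sumdiff p y x.
Proof.
  unfold lp2_sumdiff, lp2.
  replace ((y - x) / 2) with (- ((x - y) / 2)) by field.
  rewrite Rabs_Ropp, (Rplus_comm y x); reflexivity.
Qed.

Lemma lp2_sumdiff_opp_l p x y : lp2_sumdiff p (- x) y = lp2_sumdiff p x y.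
Proof.
  unfold lp2_sumdiff, lp2.
  replace ((- x + y) / 2) with (- ((x - y) / 2)) by field.
  replace ((- x - y) / 2) with (- ((x + y) / 2)) by field.
  rewrite !Rabs_Ropp, Rplus_comm; reflexivity.
Qed.

(* By convexity: [x'] is a convex combination of [x] and [-x], and the function
   is even in its first argument. *)
Lemma lp2_sumdiff_le_l p x' x y : 1 <= p -> Rabs x' <= x ->
  lp2_sumdiff p x' y <= lp2_sumdiff p x y.
Proof.
  intros Hp Hx'.
  pose proof (Rle_abs x'); pose proof (Rle_abs (- x')); rewrite Rabs_Ropp in *.
  destruct (Req_dec x 0) as [-> | Hx0].
  { replace x' with 0 by lra; lra. }
  set (l := (x + x') / (2 * x)).
  assert (Hl : 0 <= l <= 1).
  { assert (0 < / (2 * x)) by (apply Rinv_0_lt_compat; lra).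
    assert (1 - l = (x - x') * / (2 * x)) by (unfold l; field; lra).
    unfold l, Rdiv in *; split; nra. }
  replace x' with (l * x + (1 - l) * (- x)) by (unfold l; field; lra).
  replace y with (l * y + (1 - l) * y) at 1 by ring.
  eapply Rle_trans; [apply lp2_sumdiff_convex; assumption |].
  rewrite lp2_sumdiff_opp_l; lra.
Qed.

Lemma lp2_sumdiff_le p x' y' x y : 1 <= p -> Rabs x' <= x -> Rabs y' <= y ->
  lp2_sumdiff p x' y' <= lp2_sumdiff p x y.
Proof.
  intros Hp Hx Hy.
  apply Rle_trans with (lp2_sumdiff p x y'); [apply lp2_sumdiff_le_l; assumption |].
  rewrite (lp2_sumdiff_comm p x y'), (lp2_sumdiff_comm p x y).
  apply lp2_sumdiff_le_l; assumption.
Qed.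

Definition hypot (x y : R) : R := sqrt (x ^ 2 + y ^ 2).

Lemma hypot_ge0 x y : 0 <= hypot x y.
Proof. apply sqrt_pos. Qed.

Lemma hypot_sq x y : hypot x y * hypot x y = x ^ 2 + y ^ 2.
Proof. apply sqrt_sqrt; nra. Qed.

Lemma hypot_mid a b c d :
  hypot ((a + b) / 2) ((c + d) / 2) <= (hypot a c + hypot b d) / 2.
Proof.
  assert (Hcs : a * b + c * d <= hypot a c * hypot b d).
  { unfold hypot; replace (a ^ 2 + c ^ 2) with (a² + c²) by (unfold Rsqr; ring).
    replace (b ^ 2 + d ^ 2) with (b² + d²) by (unfold Rsqr; ring).
    apply sqrt_cauchy. }
  pose proof (hypot_ge0 a c); pose proof (hypot_ge0 b d).
  pose proof (hypot_sq a c); pose proof (hypot_sq b d).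
  rewrite <- (sqrt_pow2 ((hypot a c + hypot b d) / 2)) by lra.
  apply sqrt_le_1_alt; nra.
Qed.

Definition vtr (y : vec4) : vec4 := V4 (c1 y) (c3 y) (c2 y) (c4 y).

Definition vmid (u v : vec4) : vec4 :=
  V4 ((c1 u + c1 v) / 2) ((c2 u + c2 v) / 2) ((c3 u + c3 v) / 2) ((c4 u + c4 v) / 2).

(* Writing the matrix as [[y1, y2], [y3, y4]] = C + D with C conformal
   ([[a, -b], [b, a]]) and D anticonformal ([[c, d], [d, -c]]), its singular
   values are [(U + V) / 2] and [|U - V| / 2], where [U] and [V] below are
   twice the operator norms of C and D. *)
Definition conformal_norm (y : vec4) : R := hypot (c1 y + c4 y) (c2 y - c3 y).
Definition anticonformal_norm (y : vec4) : R := hypot (c1 y - c4 y) (c2 y + c3 y).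

Lemma schatten_lp2_sumdiff p y :
  schatten p y = lp2_sumdiff p (conformal_norm y) (anticonformal_norm y).
Proof.
  set (U := conformal_norm y); set (V := anticonformal_norm y).
  assert (HU : U * U = (c1 y + c4 y) ^ 2 + (c2 y - c3 y) ^ 2) by apply hypot_sq.
  assert (HV : V * V = (c1 y - c4 y) ^ 2 + (c2 y + c3 y) ^ 2) by apply hypot_sq.
  assert (Hdisc : sqrt (gram_tr y ^ 2 - 4 * gram_det y) = U * V).
  { unfold U, V, conformal_norm, anticonformal_norm, hypot.
    rewrite <- sqrt_mult by nra; f_equal.
    unfold gram_tr, gram_det, gram11, gram12, gram22; ring. }
  assert (Htr : gram_tr y = (U * U + V * V) / 2).
  { rewrite HU, HV; unfold gram_tr, gram11, gram22; field. }
  assert (Hmax : sing_max y = Rabs ((U + V) / 2)).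
  { unfold sing_max, eig_max; rewrite Hdisc, Htr, <- sqrt_Rsqr_abs.
    f_equal; unfold Rsqr; field. }
  assert (Hmin : sing_min y = Rabs ((U - V) / 2)).
  { unfold sing_min, eig_min; rewrite Hdisc, Htr, <- sqrt_Rsqr_abs.
    f_equal; unfold Rsqr; field. }
  unfold schatten, lp2_sumdiff, lp2; rewrite Hmax, Hmin; reflexivity.
Qed.

Lemma schatten_vtr p y : schatten p (vtr y) = schatten p y.
Proof.
  rewrite !schatten_lp2_sumdiff; unfold conformal_norm, anticonformal_norm, hypot, vtr.
  simpl; f_equal; f_equal; ring.
Qed.

Lemma schatten_vmid p u v : 1 <= p ->
  schatten p (vmid u v) <= (schatten p u + schatten p v) / 2.
Proof.
  intros Hp; rewrite !schatten_lp2_sumdiff.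
  assert (HU : conformal_norm (vmid u v) <= (conformal_norm u + conformal_norm v) / 2).
  { unfold conformal_norm; simpl.
    replace ((c1 u + c1 v) / 2 + (c4 u + c4 v) / 2)
      with (((c1 u + c4 u) + (c1 v + c4 v)) / 2) by field.
    replace ((c2 u + c2 v) / 2 - (c3 u + c3 v) / 2)
      with (((c2 u - c3 u) + (c2 v - c3 v)) / 2) by field.
    apply hypot_mid. }
  assert (HV : anticonformal_norm (vmid u v)
               <= (anticonformal_norm u + anticonformal_norm v) / 2).
  { unfold anticonformal_norm; simpl.
    replace ((c1 u + c1 v) / 2 - (c4 u + c4 v) / 2)
      with (((c1 u - c4 u) + (c1 v - c4 v)) / 2) by field.
    replace ((c2 u + c2 v) / 2 + (c3 u + c3 v) / 2)
      with (((c2 u + c3 u) + (c2 v + c3 v)) / 2) by field.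
    apply hypot_mid. }
  eapply Rle_trans.
  { apply lp2_sumdiff_le; [exact Hp | rewrite Rabs_pos_eq by apply hypot_ge0 ..]; eassumption. }
  replace ((conformal_norm u + conformal_norm v) / 2)
    with (/ 2 * conformal_norm u + (1 - / 2) * conformal_norm v) by field.
  replace ((anticonformal_norm u + anticonformal_norm v) / 2)
    with (/ 2 * anticonformal_norm u + (1 - / 2) * anticonformal_norm v) by field.
  eapply Rle_trans; [apply lp2_sumdiff_convex; [exact Hp | lra] |]; lra.
Qed.

(* The decimal literal [0.5] in [Kmap] and [Lmap] is not normalised by [ring]. *)
Lemma Rhalf_decimal : 0.5 = / 2.
Proof. lra. Qed.

Lemma norm2_sq y : norm2 y ^ 2 = c1 y ^ 2 + c2 y ^ 2 + c3 y ^ 2 + c4 y ^ 2.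
Proof. apply pow2_sqrt; nra. Qed.

Lemma norm2_sub_sq_le0 u v : norm2 (vsub u v) ^ 2 <= 0 -> u = v.
Proof.
  rewrite norm2_sq; destruct u as [u1 u2 u3 u4], v as [v1 v2 v3 v4]; simpl; intros H.
  assert (Hsq : forall x, x ^ 2 <= 0 -> x = 0) by (intros x Hx; nra).
  pose proof (pow2_ge_0 (u1 - v1)); pose proof (pow2_ge_0 (u2 - v2)).
  pose proof (pow2_ge_0 (u3 - v3)); pose proof (pow2_ge_0 (u4 - v4)).
  f_equal; apply Rminus_diag_uniq, Hsq; lra.
Qed.

Lemma norm2_vtr_sub u b : vtr b = b -> norm2 (vsub (vtr u) b) = norm2 (vsub u b).
Proof.
  intros Hb; rewrite <- Hb at 1; unfold norm2, vtr; simpl; f_equal; ring.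
Qed.

Lemma norm2_vmid_sub u v b :
  norm2 (vsub (vmid u v) b) ^ 2
    = (norm2 (vsub u b) ^ 2 + norm2 (vsub v b) ^ 2) / 2 - norm2 (vsub u v) ^ 2 / 4.
Proof. rewrite !norm2_sq; cbn [c1 c2 c3 c4 vsub vmid]; field. Qed.

Lemma norm2_sub_Kmap_Lmap z a :
  norm2 (vsub z a) ^ 2
    = norm2 (vsub (Kmap z) (Kmap a)) ^ 2 + norm2 (vsub (Lmap z) (Lmap a)) ^ 2.
Proof.
  rewrite !norm2_sq; cbn [c1 c2 c3 c4 vsub Kmap Lmap]; rewrite Rhalf_decimal; field.
Qed.

Lemma vadd_Lmap_Kmap z : vadd (Lmap z) (Kmap z) = z.
Proof.
  destruct z as [z1 z2 z3 z4]; unfold vadd, Lmap, Kmap; cbn [c1 c2 c3 c4].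
  rewrite Rhalf_decimal; f_equal; field.
Qed.

Lemma vtr_Kmap a : vtr (Kmap a) = Kmap a.
Proof. reflexivity. Qed.

Lemma Kmap_vadd_Lmap a w : vtr w = w -> Kmap (vadd (Lmap a) w) = w.
Proof.
  destruct w as [w1 w2 w3 w4]; unfold vtr; cbn [c1 c2 c3 c4].
  intros H; injection H as -> _.
  unfold Kmap, Lmap, vadd; cbn [c1 c2 c3 c4]; rewrite Rhalf_decimal; f_equal; field.
Qed.

Lemma Lmap_vadd_Lmap a w : vtr w = w -> Lmap (vadd (Lmap a) w) = Lmap a.
Proof.
  destruct w as [w1 w2 w3 w4]; unfold vtr; cbn [c1 c2 c3 c4].
  intros H; injection H as -> _.
  unfold Lmap, vadd; cbn [c1 c2 c3 c4]; rewrite Rhalf_decimal; f_equal; field.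
Qed.

Lemma norm2_vsub_diag u : norm2 (vsub u u) = 0.
Proof.
  unfold norm2, vsub; simpl; rewrite !Rminus_diag; simpl.
  rewrite !Rmult_0_l, !Rplus_0_l; apply sqrt_0.
Qed.

Section TransposeInvariantPenalty.

Variables (N : vec4 -> R) (t : R).
Hypothesis N_vmid : forall u v, N (vmid u v) <= (N u + N v) / 2.
Hypothesis N_vtr : forall u, N (vtr u) = N u.
Hypothesis t_ge0 : 0 <= t.

Let obj (b z : vec4) : R := / 2 * norm2 (vsub z b) ^ 2 + t * N z.
Let objK (a z : vec4) : R := / 2 * norm2 (vsub z a) ^ 2 + t * N (Kmap z).

Lemma obj_vmid b u v :
  obj b (vmid u v) <= (obj b u + obj b v) / 2 - norm2 (vsub u v) ^ 2 / 8.
Proof.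
  unfold obj; rewrite norm2_vmid_sub.
  pose proof (Rmult_le_compat_l t _ _ t_ge0 (N_vmid u v)); lra.
Qed.

Lemma obj_minimizer_unique b u v :
  is_minimizer (obj b) u -> is_minimizer (obj b) v -> u = v.
Proof.
  intros Hu Hv; apply norm2_sub_sq_le0.
  pose proof (obj_vmid b u v); pose proof (Hu (vmid u v)).
  pose proof (Hu v); pose proof (Hv u); lra.
Qed.

Lemma obj_minimizer_vtr b w : vtr b = b -> is_minimizer (obj b) w -> vtr w = w.
Proof.
  intros Hb Hw; apply (obj_minimizer_unique b); [| exact Hw].
  intros z; unfold obj; rewrite norm2_vtr_sub, N_vtr by exact Hb; apply Hw.
Qed.

Lemma objK_split a z :
  objK a z = obj (Kmap a) (Kmap z) + / 2 * norm2 (vsub (Lmap z) (Lmap a)) ^ 2.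
Proof. unfold objK, obj; rewrite norm2_sub_Kmap_Lmap; ring. Qed.

Theorem objK_minimizer a w : is_minimizer (obj (Kmap a)) w ->
  is_minimizer (objK a) (vadd (Lmap a) w) /\
  (forall z, is_minimizer (objK a) z -> z = vadd (Lmap a) w).
Proof.
  intros Hw.
  assert (Hsym : vtr w = w) by exact (obj_minimizer_vtr _ _ (vtr_Kmap a) Hw).
  assert (Hval : objK a (vadd (Lmap a) w) = obj (Kmap a) w).
  { rewrite objK_split, Kmap_vadd_Lmap, Lmap_vadd_Lmap, norm2_vsub_diag by exact Hsym.
    ring. }
  split.
  - intros z; rewrite Hval, objK_split.
    pose proof (Hw (Kmap z)); pose proof (pow2_ge_0 (norm2 (vsub (Lmap z) (Lmap a)))); lra.
  - intros z Hz.
    pose proof (Hz (vadd (Lmap a) w)) as Hle; rewrite Hval, objK_split in Hle.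
    pose proof (Hw (Kmap z)); pose proof (pow2_ge_0 (norm2 (vsub (Lmap z) (Lmap a)))).
    assert (HL : Lmap z = Lmap a) by (apply norm2_sub_sq_le0; lra).
    assert (HK : Kmap z = w).
    { apply (obj_minimizer_unique (Kmap a)); [| exact Hw].
      intros y; pose proof (Hw y); lra. }
    rewrite <- (vadd_Lmap_Kmap z), HL, HK; reflexivity.
Qed.

End TransposeInvariantPenalty.

Theorem proposition3 (p t : R) (a : vec4) :
  1 <= p -> 0 <= t ->
  forall w : vec4,
    is_minimizer (prox_obj p t (Kmap a)) w ->
    is_minimizer (fun z => Ls p t z a) (vadd (Lmap a) w) /\
    (forall z, is_minimizer (fun z' => Ls p t z' a) z -> z = vadd (Lmap a) w).
Proof.
  intros Hp Ht w Hw.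
  exact (objK_minimizer (schatten p) t (fun u v => schatten_vmid p u v Hp)
           (schatten_vtr p) Ht a w Hw).
Qed.
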